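(* For each integer $n\ge 2$ let $a_{1,n},\dots,a_{n,n}>0$ with $\sum_{i=1}^n a_{i,n}=n$, and suppose there exists $M\ge 1$ such that $a_{i,n}\le M$ for all $n\ge 2$ and all $i=1,\dots,n$. Let $\gamma$ be Euler's constant. Then for every $\varepsilon>0$ there exists $\delta>0$ such that for every $s\in(-\delta,\delta)\setminus\{0\}$ and every integer $n\ge 2$, $$(1-\varepsilon)e^{-\gamma}<\left(\prod_{i=1}^n\Gamma(1+a_{i,n}s)\right)^{1/(sn)}<(1+\varepsilon)e^{-\gamma}.$$
   Context: $\Gamma$ is the Gamma function. *)

From Stdlib Require Import Reals.
From Coquelicot Require Import Coquelicot.
Open Scope R_scope.

Definition Gamma (x : R) : R :=
  RInt_gen (fun t => Rpower t (x - 1) * exp (- t)) (at_right 0) (Rbar_locally p_infty).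

Definition euler_gamma : R :=
  real (Lim_seq (fun N => sum_f_R0 (fun k => / INR (k + 1)) N - ln (INR (N + 1)))).

From Stdlib Require Import Reals Lra Lia Psatz Factorial Classical.
From Coquelicot Require Import Coquelicot.
Open Scope R_scope.

(* For [|x| <= 1/2] we show [exp (- γ x) <= Γ(1 + x) <= exp (- γ x + 4 x^2)]. With [x = a_{i,n} s],
   [Σ_i a_{i,n} = n] and [a_{i,n} <= M], the logarithm of the product then lies between [- γ s n] and
   [- γ s n + 4 M s^2 n], so its [(s n)]-th root is [exp (- γ + O (M |s|))].

   The bounds on [Γ(1 + x)] come from Gauss' formula. The truncated integrals
   [J_n = ∫_0^n (1 - t/n)^n t^x dt = n^(x+1) n! / ((x + 1) (x + 2) ... (x + 1 + n))]
   are below [Γ(1 + x)] because [(1 - t/n)^n <= exp (- t)], while [∫_a^b t^x exp (- t) dt <= J_n + 7/n]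
   because [exp (- t) (1 - t^2/n) <= (1 - t/n)^n]. Writing the denominator as
   [n! (x + 1 + n) Π_{k<=n} (1 + x/k)] and using [u - 2 u^2 <= ln (1 + u) <= u] traps [J_n] between
   [c_n = exp (- x (H_n - ln n)) n / (x + 1 + n)] and [exp (4 x^2) c_n], and [c_n -> exp (- γ x)]. *)

Lemma exp_le_mono x y : x <= y -> exp x <= exp y.
Proof. intros [H | ->]; [left; now apply exp_increasing | apply Rle_refl]. Qed.

Lemma pow_exp z n : exp z ^ n = exp (z * INR n).
Proof.
  induction n as [|n IH]; [simpl; now rewrite Rmult_0_r, exp_0|].
  rewrite S_INR, <- tech_pow_Rmult, IH, <- exp_plus. f_equal; ring.
Qed.

Lemma ln_le_sub_1 z : 0 < z -> ln z <= z - 1.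
Proof. intros Hz. generalize (exp_ineq1_le (ln z)). rewrite exp_ln; lra. Qed.

Lemma ln_ge_1_sub_inv z : 0 < z -> 1 - / z <= ln z.
Proof.
  intros Hz. generalize (ln_le_sub_1 (/ z) (Rinv_0_lt_compat z Hz)).
  rewrite ln_Rinv; lra.
Qed.

Lemma exp_sub_2sqr_le_1p u : - 1 / 2 <= u <= 1 / 2 -> exp (u - 2 * u ^ 2) <= 1 + u.
Proof.
  intros Hu. rewrite <- (exp_ln (1 + u)) by lra. apply exp_le_mono.
  assert (Hq : u - 2 * u ^ 2 <= 1 - / (1 + u)).
  { apply Rmult_le_reg_r with (1 + u); [lra|].
    replace ((1 - / (1 + u)) * (1 + u)) with u by (field; lra). nra. }
  generalize (ln_ge_1_sub_inv (1 + u)); lra.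
Qed.

Lemma bernoulli_ineq c N : 0 <= c <= 1 -> 1 - INR N * c <= (1 - c) ^ N.
Proof.
  intros Hc. induction N as [|N IH]; [simpl; lra|].
  rewrite S_INR. simpl.
  assert ((1 - INR N * c) * (1 - c) <= (1 - c) ^ N * (1 - c)) by (apply Rmult_le_compat_r; lra).
  generalize (pos_INR N); nra.
Qed.

Lemma pow_1_sub_div_bounds k t b : 0 <= t <= b -> 0 < b -> 0 <= (1 - t / b) ^ k <= 1.
Proof.
  intros Ht Hb. assert (0 <= t / b <= 1) by (split; [apply Rdiv_le_0_compat | apply (Rdiv_le_1 t b)]; lra).
  split; [apply pow_le; lra | apply Rle_trans with (1 ^ k); [apply pow_incr; lra | rewrite pow1; lra]].
Qed.

Lemma Rpower_pos x y : 0 < Rpower x y.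
Proof. apply exp_pos. Qed.

Ltac solve_continuity :=
  apply (@ex_derive_continuous R_AbsRing R_NormedModule); unfold Rpower; auto_derive; lra.

Lemma ex_RInt_continuous_pos (f : R -> R) a b :
  0 < a <= b -> (forall t, 0 < t -> continuous f t) -> ex_RInt f a b.
Proof.
  intros Hab Hf. apply (@ex_RInt_continuous R_CompleteNormedModule).
  intros t Ht. rewrite Rmin_left, Rmax_right in Ht by lra. apply Hf; lra.
Qed.

Lemma RInt_subinterval_le (f : R -> R) a a' b' b :
  0 < a -> a <= a' -> a' <= b' -> b' <= b ->
  (forall t, 0 < t -> continuous f t) -> (forall t, a <= t <= b -> 0 <= f t) ->
  RInt f a' b' <= RInt f a b.
Proof.
  intros Ha Ha' Hab Hb Hc Hpos.
  assert (Hex : forall u v, a <= u <= v -> ex_RInt f u v)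
    by (intros u v Huv; apply ex_RInt_continuous_pos; [lra | exact Hc]).
  rewrite <- (RInt_Chasles f a a' b), <- (RInt_Chasles f a' b' b) by (apply Hex; lra).
  assert (0 <= RInt f a a')
    by (apply RInt_ge_0; [lra | apply Hex; lra | intros t Ht; apply Hpos; lra]).
  assert (0 <= RInt f b' b)
    by (apply RInt_ge_0; [lra | apply Hex; lra | intros t Ht; apply Hpos; lra]).
  unfold plus; simpl. lra.
Qed.

Lemma le_of_le_add_Rpower v w D p a0 :
  0 < p -> 0 < a0 -> (forall a, 0 < a < a0 -> v <= w + D * Rpower a p) -> v <= w.
Proof.
  intros Hp Ha0 H. apply Rnot_lt_le. intros Hlt.
  set (e := (v - w) / (2 * (Rabs D + 1))).
  assert (He : 0 < e) by (apply Rdiv_lt_0_compat; generalize (Rabs_pos D); lra).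
  set (a := Rmin (a0 / 2) (Rpower e (/ p))).
  assert (Ha : 0 < a < a0).
  { split; [apply Rmin_pos; [lra | apply Rpower_pos] |].
    generalize (Rmin_l (a0 / 2) (Rpower e (/ p))); fold a; lra. }
  assert (Hap : Rpower a p <= e).
  { replace e with (Rpower (Rpower e (/ p)) p)
      by (rewrite Rpower_mult, Rinv_l, Rpower_1; lra).
    apply Rle_Rpower_l; [lra | split; [lra | apply Rmin_r]]. }
  assert (D * Rpower a p <= Rabs D * e).
  { apply Rle_trans with (Rabs D * Rpower a p).
    - apply Rmult_le_compat_r; [left; apply Rpower_pos | apply Rle_abs].
    - apply Rmult_le_compat_l; [apply Rabs_pos | exact Hap]. }
  assert (Rabs D * e < v - w).
  { unfold e. apply Rmult_lt_reg_r with (2 * (Rabs D + 1)); [generalize (Rabs_pos D); lra|].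
    replace (Rabs D * ((v - w) / (2 * (Rabs D + 1))) * (2 * (Rabs D + 1))) with (Rabs D * (v - w))
      by (field; generalize (Rabs_pos D); lra).
    generalize (Rabs_pos D); nra. }
  specialize (H a Ha). lra.
Qed.

(* [rising_fact m y = y (y + 1) ... (y + m)] has [m + 1] factors. *)
Fixpoint rising_fact (m : nat) (y : R) : R :=
  match m with O => y | S m' => rising_fact m' y * (y + INR (S m')) end.

Lemma rising_fact_S m y : rising_fact (S m) y = y * rising_fact m (y + 1).
Proof.
  revert y; induction m as [|m IH]; intros y; [simpl; ring|].
  change (rising_fact (S (S m)) y) with (rising_fact (S m) y * (y + INR (S (S m)))).
  rewrite IH. change (rising_fact (S m) (y + 1)) with (rising_fact m (y + 1) * (y + 1 + INR (S m))).
  rewrite !(S_INR (S m)). ring.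
Qed.

Lemma rising_fact_pos m y : 0 < y -> 0 < rising_fact m y.
Proof.
  intros Hy. induction m as [|m IH]; [exact Hy|].
  change (0 < rising_fact m y * (y + INR (S m))).
  apply Rmult_lt_0_compat; [exact IH | generalize (pos_INR (S m)); lra].
Qed.

Definition beta_kernel (m : nat) (b y t : R) : R := (1 - t / b) ^ m * Rpower t (y - 1).

Definition beta_value (m : nat) (b y : R) : R := Rpower b y * INR (fact m) / rising_fact m y.

Lemma continuous_beta_kernel m b y t : 0 < t -> continuous (beta_kernel m b y) t.
Proof. intros Ht. unfold beta_kernel. solve_continuity. Qed.

Lemma beta_kernel_ge0 m b y t : 0 < t <= b -> 0 <= beta_kernel m b y t.
Proof.
  intros Ht. apply Rmult_le_pos; [apply (pow_1_sub_div_bounds m t b); lra | left; apply Rpower_pos].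
Qed.

Lemma ex_RInt_beta_kernel m b y a a' : 0 < a <= a' -> ex_RInt (beta_kernel m b y) a a'.
Proof. intros Ha. apply ex_RInt_continuous_pos; [exact Ha | intros t; apply continuous_beta_kernel]. Qed.

Lemma beta_value_S m b y :
  0 < y -> 0 < b -> beta_value (S m) b y = INR (S m) / (b * y) * beta_value m b (y + 1).
Proof.
  intros Hy Hb. unfold beta_value.
  rewrite rising_fact_S, Rpower_plus, Rpower_1, fact_simpl, mult_INR by lra.
  field. generalize (rising_fact_pos m (y + 1)); lra.
Qed.

Lemma RInt_beta_kernel_0 y a b :
  0 < y -> 0 < a <= b -> RInt (beta_kernel 0 b y) a b = beta_value 0 b y - Rpower a y / y.
Proof.
  intros Hy Hab. unfold beta_value. simpl rising_fact. simpl fact.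
  replace (Rpower b y * INR 1 / y - Rpower a y / y) with (Rpower b y / y - Rpower a y / y)
    by (simpl; field; lra).
  apply is_RInt_unique, (is_RInt_derive (fun t => Rpower t y / y)).
  - intros t Ht. rewrite Rmin_left, Rmax_right in Ht by lra.
    unfold beta_kernel, Rpower. auto_derive; [lra|].
    replace ((y - 1) * ln t) with (y * ln t + - ln t) by ring.
    rewrite exp_plus, exp_Ropp, exp_ln by lra. field. lra.
  - intros t Ht. rewrite Rmin_left, Rmax_right in Ht by lra. apply continuous_beta_kernel; lra.
Qed.

(* Integration by parts, differentiating [(1 - t / b) ^ (S m)] and integrating [t ^ (y - 1)]. *)
Lemma RInt_beta_kernel_S m b y a :
  0 < y -> 0 < a < b ->
  RInt (beta_kernel (S m) b y) a b =
    - ((1 - a / b) ^ S m * Rpower a y / y) + INR (S m) / (b * y) * RInt (beta_kernel m b (y + 1)) a b.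
Proof.
  intros Hy Hab.
  set (c := INR (S m) / (b * y)).
  set (F := fun t => (1 - t / b) ^ S m * (Rpower t y / y)).
  set (f := fun t => beta_kernel (S m) b y t - c * beta_kernel m b (y + 1) t).
  assert (HF : is_RInt f a b (F b - F a)).
  { apply (is_RInt_derive F f); intros t Ht; rewrite Rmin_left, Rmax_right in Ht by lra.
    - unfold F, f, c, beta_kernel, Rpower. auto_derive; [lra|].
      change (match m with 0%nat => 1 | S _ => INR m + 1 end) with (INR (S m)).
      replace ((y - 1) * ln t) with (y * ln t + - ln t) by ring.
      replace ((y + 1 - 1) * ln t) with (y * ln t) by ring.
      rewrite exp_plus, exp_Ropp, exp_ln by lra. simpl pow. unfold Rminus, Rdiv.
      set (p := (1 + - (t * / b)) ^ m). field. lra.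
    - unfold f, beta_kernel. solve_continuity. }
  assert (HFb : F b = 0)
    by (unfold F; replace (1 - b / b) with 0 by (field; lra); rewrite pow_i by lia; ring).
  assert (Hex : ex_RInt (beta_kernel m b (y + 1)) a b) by (apply ex_RInt_beta_kernel; lra).
  apply is_RInt_unique.
  apply (is_RInt_ext (fun t => plus (f t) (scal c (beta_kernel m b (y + 1) t)))).
  { intros t _. unfold f, plus, scal; simpl; unfold mult; simpl. ring. }
  replace (- ((1 - a / b) ^ S m * Rpower a y / y) + c * RInt (beta_kernel m b (y + 1)) a b)
    with (plus (F b - F a) (scal c (RInt (beta_kernel m b (y + 1)) a b)))
    by (rewrite HFb; unfold F, plus, scal; simpl; unfold mult; simpl; lra).
  apply (is_RInt_plus (V := R_NormedModule)); [exact HF|].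
  apply (is_RInt_scal (V := R_NormedModule)), (RInt_correct (V := R_CompleteNormedModule)), Hex.
Qed.

Lemma RInt_beta_kernel_approx m : forall y b, 0 < y -> 0 < b ->
  exists D, forall a, 0 < a < b ->
    Rabs (RInt (beta_kernel m b y) a b - beta_value m b y) <= D * Rpower a y.
Proof.
  induction m as [|m IH]; intros y b Hy Hb.
  - exists (/ y). intros a Ha. rewrite RInt_beta_kernel_0 by lra.
    replace (beta_value 0 b y - Rpower a y / y - beta_value 0 b y) with (- (Rpower a y / y)) by ring.
    rewrite Rabs_Ropp, Rabs_pos_eq; [right; unfold Rdiv; ring|].
    left; apply Rdiv_lt_0_compat; [apply Rpower_pos | exact Hy].
  - destruct (IH (y + 1) b) as [D HD]; [lra | exact Hb |].
    set (c := INR (S m) / (b * y)).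
    assert (Hc : 0 <= c) by (apply Rle_mult_inv_pos; [apply pos_INR | nra]).
    exists (/ y + c * Rabs D * b). intros a Ha.
    rewrite RInt_beta_kernel_S, beta_value_S by lra. fold c.
    set (A := Rpower a y).
    assert (HA : 0 < A) by apply Rpower_pos.
    assert (Hq : 0 <= (1 - a / b) ^ S m * A / y <= A / y).
    { assert (0 <= (1 - a / b) ^ S m <= 1) by (apply pow_1_sub_div_bounds; lra).
      unfold Rdiv. split; [apply Rmult_le_pos; [nra | left; now apply Rinv_0_lt_compat]|].
      apply Rmult_le_compat_r; [left; now apply Rinv_0_lt_compat | nra]. }
    assert (HI : Rabs (RInt (beta_kernel m b (y + 1)) a b - beta_value m b (y + 1)) <= Rabs D * b * A).
    { eapply Rle_trans; [apply HD; exact Ha|].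
      rewrite Rpower_plus, Rpower_1 by lra. fold A.
      apply Rle_trans with (Rabs D * (A * a)).
      - apply Rmult_le_compat_r; [nra | apply Rle_abs].
      - replace (Rabs D * b * A) with (Rabs D * (A * b)) by ring.
        apply Rmult_le_compat_l; [apply Rabs_pos | apply Rmult_le_compat_l; lra]. }
    replace (- ((1 - a / b) ^ S m * A / y) + c * RInt (beta_kernel m b (y + 1)) a b
               - c * beta_value m b (y + 1))
      with (- ((1 - a / b) ^ S m * A / y)
            + c * (RInt (beta_kernel m b (y + 1)) a b - beta_value m b (y + 1))) by ring.
    eapply Rle_trans; [apply Rabs_triang|].
    rewrite Rabs_Ropp, Rabs_mult, (Rabs_pos_eq c), (Rabs_pos_eq (_ * A / y)) by lra.
    assert (c * Rabs (RInt (beta_kernel m b (y + 1)) a b - beta_value m b (y + 1))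
              <= c * (Rabs D * b * A)) by (apply Rmult_le_compat_l; assumption).
    replace ((/ y + c * Rabs D * b) * A) with (A / y + c * (Rabs D * b * A)) by (unfold Rdiv; ring).
    lra.
Qed.

Lemma RInt_beta_kernel_le m b y a :
  0 < y -> 0 < a < b -> RInt (beta_kernel m b y) a b <= beta_value m b y.
Proof.
  intros Hy Ha. destruct (RInt_beta_kernel_approx m y b) as [D HD]; [lra | lra |].
  apply (le_of_le_add_Rpower _ _ D y a); [lra | lra |]. intros a' Ha'.
  assert (RInt (beta_kernel m b y) a b <= RInt (beta_kernel m b y) a' b).
  { apply RInt_subinterval_le; try lra; [apply continuous_beta_kernel |].
    intros t Ht; apply beta_kernel_ge0; lra. }
  generalize (proj1 (Rabs_le_between' _ _ _) (HD a' ltac:(lra))). lra.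
Qed.

Lemma beta_value_le m b y L :
  0 < y -> 0 < b -> (forall a, 0 < a < b -> RInt (beta_kernel m b y) a b <= L) ->
  beta_value m b y <= L.
Proof.
  intros Hy Hb HL. destruct (RInt_beta_kernel_approx m y b Hy Hb) as [D HD].
  apply (le_of_le_add_Rpower _ _ D y b Hy Hb). intros a Ha.
  generalize (proj1 (Rabs_le_between' _ _ _) (HD a Ha)) (HL a Ha). lra.
Qed.

(* The improper integral is the supremum of the proper ones, which exists by completeness. *)
Lemma is_RInt_gen_of_bounded (f : R -> R) U :
  (forall t, 0 < t -> continuous f t) -> (forall t, 0 < t -> 0 <= f t) ->
  (forall a b, 0 < a < b -> RInt f a b <= U) ->
  exists L, is_RInt_gen f (at_right 0) (Rbar_locally p_infty) L /\
    (forall a b, 0 < a < b -> RInt f a b <= L) /\ L <= U.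
Proof.
  intros Hc Hpos HU.
  set (E := fun v => exists a b, 0 < a < b /\ v = RInt f a b).
  destruct (completeness E) as [L [HLub HLleast]].
  { exists U. intros v [a [b [Hab ->]]]. now apply HU. }
  { exists (RInt f 1 2), 1, 2. split; [lra | reflexivity]. }
  assert (HL : forall a b, 0 < a < b -> RInt f a b <= L)
    by (intros a b Hab; apply HLub; now exists a, b).
  exists L. split; [| split; [exact HL | apply HLleast; intros v [a [b [Hab ->]]]; now apply HU]].
  intros P [eps HP].
  assert (Hnear : exists a0 b0, 0 < a0 < b0 /\ L - eps < RInt f a0 b0).
  { apply NNPP. intros Hn.
    assert (L <= L - eps).
    { apply HLleast. intros v [a [b [Hab ->]]]. apply Rnot_lt_le. intros Hv. apply Hn. now exists a, b. }
    generalize (cond_pos eps); lra. }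
  destruct Hnear as [a0 [b0 [Hab0 Hnear]]].
  exists (fun a => 0 < a < a0) (fun b => b0 < b).
  - exists (mkposreal a0 (proj1 Hab0)). intros a Ha Ha0. split; [exact Ha0|].
    change (Rabs (a - 0) < a0) in Ha. apply Rabs_lt_between' in Ha. lra.
  - exists b0. now intros.
  - intros a b Ha Hb. exists (RInt f a b). split.
    + apply (RInt_correct (V := R_CompleteNormedModule)), ex_RInt_continuous_pos; [lra | exact Hc].
    + apply HP. change (Rabs (RInt f a b - L) < eps).
      assert (RInt f a0 b0 <= RInt f a b)
        by (apply RInt_subinterval_le; try lra; [exact Hc | intros t Ht; apply Hpos; lra]).
      assert (RInt f a b <= L) by (apply HL; lra).
      rewrite Rabs_left1 by lra. lra.
Qed.

Lemma pow_1_sub_div_le_exp N t :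
  0 <= t <= INR (S N) -> (1 - t / INR (S N)) ^ S N <= exp (- t).
Proof.
  intros Ht. set (n := INR (S N)) in *.
  assert (Hn : 0 < n) by (apply lt_0_INR; lia).
  replace (exp (- t)) with (exp (- t / n) ^ S N) by (rewrite pow_exp; f_equal; fold n; field; lra).
  apply pow_incr. split.
  - assert (t / n <= 1) by (apply (Rdiv_le_1 t n); lra). lra.
  - generalize (exp_ineq1_le (- t / n)). unfold Rdiv. lra.
Qed.

(* [(1 - t / n) ^ n (1 + t / n) ^ n = (1 - t^2 / n^2) ^ n >= 1 - t^2 / n] (Bernoulli)
   and [(1 + t / n) ^ n <= exp t]. *)
Lemma exp_mul_1_sub_le_pow N t :
  0 <= t <= INR (S N) -> exp (- t) * (1 - t ^ 2 / INR (S N)) <= (1 - t / INR (S N)) ^ S N.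
Proof.
  intros Ht. set (n := INR (S N)) in *.
  assert (Hn : 0 < n) by (apply lt_0_INR; lia).
  assert (Htn : 0 <= t / n <= 1) by (split; [apply Rdiv_le_0_compat | apply (Rdiv_le_1 t n)]; lra).
  assert (Hplus : (1 + t / n) ^ S N <= exp t).
  { replace (exp t) with (exp (t / n) ^ S N) by (rewrite pow_exp; f_equal; fold n; field; lra).
    apply pow_incr. split; [lra | apply exp_ineq1_le]. }
  assert (Hbern : 1 - t ^ 2 / n <= (1 - t / n) ^ S N * (1 + t / n) ^ S N).
  { rewrite <- Rpow_mult_distr.
    replace (1 - t ^ 2 / n) with (1 - INR (S N) * (t / n) ^ 2) by (fold n; field; lra).
    replace ((1 - t / n) * (1 + t / n)) with (1 - (t / n) ^ 2) by ring.
    apply bernoulli_ineq. nra. }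
  assert (H0 : 0 <= (1 - t / n) ^ S N) by (apply pow_le; lra).
  assert (Hexp : exp (- t) * exp t = 1) by (rewrite <- exp_plus, Rplus_opp_l; apply exp_0).
  assert (1 - t ^ 2 / n <= (1 - t / n) ^ S N * exp t)
    by (eapply Rle_trans; [exact Hbern | apply Rmult_le_compat_l; assumption]).
  generalize (exp_pos (- t)); nra.
Qed.

Lemma Rpower_add_2_le x t : - 1 <= x <= 1 -> 0 < t -> Rpower t (x + 2) <= 1 + t ^ 3.
Proof.
  intros Hx Ht. destruct (Rle_lt_dec t 1) as [Ht1 | Ht1].
  - assert (Hln : ln t <= 0) by (rewrite <- ln_1; apply ln_le; lra).
    assert (Rpower t (x + 2) <= 1) by (rewrite <- exp_0; apply exp_le_mono; nra).
    generalize (pow_le t 3); lra.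
  - rewrite <- (Rpower_pow 3 t) by lra.
    assert (Rpower t (x + 2) <= Rpower t (INR 3)) by (apply Rle_Rpower; simpl; lra). lra.
Qed.

Lemma RInt_cubic_exp_le a b : 0 <= a <= b -> RInt (fun t => (1 + t ^ 3) * exp (- t)) a b <= 7.
Proof.
  intros Hab.
  set (F := fun t => - (t ^ 3 + 3 * t ^ 2 + 6 * t + 7) * exp (- t)).
  rewrite (is_RInt_unique _ a b (F b - F a)).
  2:{ apply (is_RInt_derive F); intros t _.
      - unfold F. auto_derive; [exact I | ring].
      - apply (@ex_derive_continuous R_AbsRing R_NormedModule). auto_derive. exact I. }
  assert (0 <= (b ^ 3 + 3 * b ^ 2 + 6 * b + 7) * exp (- b))
    by (apply Rmult_le_pos; [nra | left; apply exp_pos]).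
  assert (Htaylor : 1 + a + a ^ 2 / 2 + a ^ 3 / 6 <= exp a).
  { eapply Rle_trans; [| exact (exp_ge_taylor a 3 (proj1 Hab))]. right. simpl. field. }
  assert (Hexp : exp (- a) * exp a = 1) by (rewrite <- exp_plus, Rplus_opp_l; apply exp_0).
  assert ((a ^ 3 + 3 * a ^ 2 + 6 * a + 7) * exp (- a) <= 7).
  { assert (a ^ 3 + 3 * a ^ 2 + 6 * a + 7 <= 7 * exp a) by nra.
    generalize (exp_pos (- a)); nra. }
  unfold F. lra.
Qed.

Fixpoint harmonic (k : nat) : R :=
  match k with O => 0 | S k' => harmonic k' + / INR (S k') end.

Fixpoint harmonic2 (k : nat) : R :=
  match k with O => 0 | S k' => harmonic2 k' + / INR (S k') ^ 2 end.

Fixpoint gauss_prod (x : R) (k : nat) : R :=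
  match k with O => 1 | S k' => gauss_prod x k' * (1 + x / INR (S k')) end.

Lemma harmonic2_S_le m : harmonic2 (S m) <= 2 - / INR (S m).
Proof.
  induction m as [|m IH]; [simpl; lra|].
  change (harmonic2 (S (S m))) with (harmonic2 (S m) + / INR (S (S m)) ^ 2).
  rewrite (S_INR (S m)). set (k := INR (S m)) in *.
  assert (1 <= k) by (unfold k; rewrite S_INR; generalize (pos_INR m); lra).
  assert (/ (k + 1) ^ 2 <= / k - / (k + 1)).
  { replace (/ k - / (k + 1)) with (/ (k * (k + 1))) by (field; lra).
    apply Rinv_le_contravar; nra. }
  lra.
Qed.

Lemma harmonic2_le_2 m : harmonic2 m <= 2.
Proof.
  destruct m as [|m]; [simpl; lra|].
  generalize (harmonic2_S_le m) (Rinv_0_lt_compat _ (lt_0_INR (S m) (Nat.lt_0_succ m))). lra.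
Qed.

(* Termwise [u - 2 u^2 <= ln (1 + u) <= u] with [u = x / k]. *)
Lemma gauss_prod_bounds x m : - 1 / 2 <= x <= 1 / 2 ->
  exp (x * harmonic m - 2 * x ^ 2 * harmonic2 m) <= gauss_prod x m <= exp (x * harmonic m).
Proof.
  intros Hx. induction m as [|m [IH1 IH2]].
  { simpl. rewrite !Rmult_0_r, Rminus_0_r, exp_0. lra. }
  change (gauss_prod x (S m)) with (gauss_prod x m * (1 + x / INR (S m))).
  change (harmonic (S m)) with (harmonic m + / INR (S m)).
  change (harmonic2 (S m)) with (harmonic2 m + / INR (S m) ^ 2).
  set (k := INR (S m)). assert (Hk : 1 <= k) by (unfold k; rewrite S_INR; generalize (pos_INR m); lra).
  set (u := x / k).
  assert (Hu : - 1 / 2 <= u <= 1 / 2).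
  { assert (0 < / k) by (apply Rinv_0_lt_compat; lra).
    assert (/ k <= 1) by (rewrite <- Rinv_1; apply Rinv_le_contravar; lra).
    unfold u, Rdiv. split; nra. }
  replace (x * (harmonic m + / k) - 2 * x ^ 2 * (harmonic2 m + / k ^ 2))
    with ((x * harmonic m - 2 * x ^ 2 * harmonic2 m) + (u - 2 * u ^ 2)) by (unfold u; field; lra).
  replace (x * (harmonic m + / k)) with (x * harmonic m + u) by (unfold u; field; lra).
  rewrite !exp_plus.
  generalize (exp_sub_2sqr_le_1p u Hu) (exp_ineq1_le u)
    (exp_pos (x * harmonic m - 2 * x ^ 2 * harmonic2 m)) (exp_pos (u - 2 * u ^ 2)).
  intros. split; apply Rmult_le_compat; lra.
Qed.

Lemma rising_fact_gauss_prod x N : 0 < x + 1 ->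
  rising_fact N (x + 1) = INR (fact N) * gauss_prod x N * (x + 1 + INR N).
Proof.
  intros Hx. induction N as [|N IH]; [simpl; ring|].
  change (rising_fact (S N) (x + 1)) with (rising_fact N (x + 1) * (x + 1 + INR (S N))).
  change (gauss_prod x (S N)) with (gauss_prod x N * (1 + x / INR (S N))).
  rewrite IH, fact_simpl, mult_INR, (S_INR N). field. generalize (pos_INR N); lra.
Qed.

Definition euler_seq (m : nat) : R := sum_f_R0 (fun k => / INR (k + 1)) m - ln (INR (m + 1)).

Lemma euler_seq_harmonic m : euler_seq m = harmonic (S m) - ln (INR (S m)).
Proof.
  unfold euler_seq. rewrite Nat.add_1_r. f_equal.
  induction m as [|m IH]; [simpl; ring|].
  rewrite tech5, IH, Nat.add_1_r. reflexivity.
Qed.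

Lemma euler_seq_decreasing m : euler_seq (S m) <= euler_seq m.
Proof.
  rewrite !euler_seq_harmonic.
  change (harmonic (S (S m))) with (harmonic (S m) + / INR (S (S m))).
  rewrite (S_INR (S m)). set (k := INR (S m)).
  assert (Hk : 1 <= k) by (unfold k; rewrite S_INR; generalize (pos_INR m); lra).
  assert (/ (k + 1) <= ln (k + 1) - ln k).
  { rewrite <- ln_div by lra.
    replace (/ (k + 1)) with (1 - / ((k + 1) / k)) by (field; lra).
    apply ln_ge_1_sub_inv, Rdiv_lt_0_compat; lra. }
  lra.
Qed.

Lemma ln_le_harmonic m : ln (INR (S m)) <= harmonic m.
Proof.
  induction m as [|m IH]; [simpl; rewrite ln_1; lra|].
  change (harmonic (S m)) with (harmonic m + / INR (S m)).
  rewrite (S_INR (S m)). set (k := INR (S m)) in *.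
  assert (Hk : 1 <= k) by (unfold k; rewrite S_INR; generalize (pos_INR m); lra).
  assert (ln (k + 1) - ln k <= / k).
  { rewrite <- ln_div by lra.
    replace (/ k) with ((k + 1) / k - 1) by (field; lra).
    apply ln_le_sub_1, Rdiv_lt_0_compat; lra. }
  lra.
Qed.

Lemma euler_seq_nonneg m : 0 <= euler_seq m.
Proof.
  rewrite euler_seq_harmonic.
  generalize (ln_le_harmonic m) (Rinv_0_lt_compat _ (lt_0_INR (S m) (Nat.lt_0_succ m))).
  change (harmonic (S m)) with (harmonic m + / INR (S m)). lra.
Qed.

Lemma is_lim_seq_euler_seq : is_lim_seq euler_seq euler_gamma.
Proof.
  destruct (ex_finite_lim_seq_decr euler_seq 0 euler_seq_decreasing euler_seq_nonneg) as [l Hl].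
  unfold euler_gamma. fold euler_seq. now rewrite (is_lim_seq_unique _ _ Hl).
Qed.

(* [beta_value n n (x + 1)] at [n = m + 1], with [gauss_prod x n] replaced by [exp (x * harmonic n)]. *)
Definition gauss_approx (x : R) (m : nat) : R :=
  exp (- x * euler_seq m) * (INR (S m) / (x + 1 + INR (S m))).

Lemma is_lim_seq_gauss_approx x : 0 < x + 1 -> is_lim_seq (gauss_approx x) (exp (- x * euler_gamma)).
Proof.
  intros Hx. unfold gauss_approx.
  rewrite <- (Rmult_1_r (exp (- x * euler_gamma))).
  apply is_lim_seq_mult'.
  - apply (is_lim_seq_continuous (fun z => exp (- x * z)) euler_seq euler_gamma);
      [| exact is_lim_seq_euler_seq].
    apply continuity_pt_filterlim.
    apply (@ex_derive_continuous R_AbsRing R_NormedModule (fun z => exp (- x * z))). auto_derive. exact I.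
  - apply is_lim_seq_ext with (fun m => 1 - (x + 1) * / (INR m + (x + 2))).
    { intros m. rewrite S_INR. field. generalize (pos_INR m); lra. }
    replace (Finite 1) with (Finite (1 - (x + 1) * 0)) by (f_equal; ring).
    apply is_lim_seq_minus'; [apply is_lim_seq_const |].
    apply (is_lim_seq_scal_l _ _ (Finite 0)).
    replace (Finite 0) with (Rbar_inv p_infty) by reflexivity. apply is_lim_seq_inv; [| discriminate].
    eapply is_lim_seq_plus; [apply is_lim_seq_INR | apply is_lim_seq_const | easy].
Qed.

Lemma beta_value_gauss_bounds x m : - 1 / 2 <= x <= 1 / 2 ->
  gauss_approx x m <= beta_value (S m) (INR (S m)) (x + 1) <= exp (4 * x ^ 2) * gauss_approx x m.
Proof.
  intros Hx. unfold gauss_approx, beta_value.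
  rewrite euler_seq_harmonic, rising_fact_gauss_prod by lra.
  set (n := INR (S m)). assert (Hn : 1 <= n) by (unfold n; rewrite S_INR; generalize (pos_INR m); lra).
  destruct (gauss_prod_bounds x (S m) Hx) as [Q1 Q2]. generalize (harmonic2_le_2 (S m)). intros HZ.
  set (Q := gauss_prod x (S m)) in *. set (H := harmonic (S m)) in *. set (Z := harmonic2 (S m)) in *.
  assert (HF : 0 < INR (fact (S m))) by apply lt_0_INR, lt_O_fact.
  assert (HQ : 0 < Q) by (generalize (exp_pos (x * H - 2 * x ^ 2 * Z)); lra).
  rewrite Rpower_plus, Rpower_1 by lra. unfold Rpower.
  set (A := exp (x * ln n) * (n / (x + 1 + n))).
  assert (HA : 0 < A) by (apply Rmult_lt_0_compat; [apply exp_pos | apply Rdiv_lt_0_compat; lra]).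
  replace (exp (x * ln n) * n * INR (fact (S m)) / (INR (fact (S m)) * Q * (x + 1 + n)))
    with (A / Q) by (unfold A; field; repeat split; lra).
  replace (exp (- x * (H - ln n)) * (n / (x + 1 + n))) with (A / exp (x * H)).
  2:{ unfold A. replace (- x * (H - ln n)) with (x * ln n + - (x * H)) by ring.
      rewrite exp_plus, exp_Ropp. field. generalize (exp_pos (x * H)); lra. }
  assert (HQ' : exp (x * H) * / exp (4 * x ^ 2) <= Q).
  { rewrite <- exp_Ropp, <- exp_plus. eapply Rle_trans; [| exact Q1]. apply exp_le_mono. nra. }
  generalize (exp_pos (x * H)) (exp_pos (4 * x ^ 2)). intros. unfold Rdiv. split.
  - apply Rmult_le_compat_l; [lra | apply Rinv_le_contravar; lra].
  - replace (exp (4 * x ^ 2) * (A * / exp (x * H))) with (A * / (exp (x * H) * / exp (4 * x ^ 2)))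
      by (field; lra).
    apply Rmult_le_compat_l; [lra | apply Rinv_le_contravar; [| exact HQ']].
    apply Rmult_lt_0_compat; [lra | now apply Rinv_0_lt_compat].
Qed.

Definition euler_integrand (x t : R) : R := Rpower t x * exp (- t).

Lemma continuous_euler_integrand x t : 0 < t -> continuous (euler_integrand x) t.
Proof. intros Ht. unfold euler_integrand. solve_continuity. Qed.

Lemma euler_integrand_ge0 x t : 0 <= euler_integrand x t.
Proof. apply Rmult_le_pos; left; [apply Rpower_pos | apply exp_pos]. Qed.

Lemma beta_kernel_shift m b x t : beta_kernel m b (x + 1) t = (1 - t / b) ^ m * Rpower t x.
Proof. unfold beta_kernel. now replace (x + 1 - 1) with x by ring. Qed.

Lemma beta_value_le_RInt_sup x m L :
  0 < x + 1 -> (forall a b, 0 < a < b -> RInt (euler_integrand x) a b <= L) ->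
  beta_value (S m) (INR (S m)) (x + 1) <= L.
Proof.
  intros Hx HL. set (n := INR (S m)). assert (Hn : 0 < n) by (apply lt_0_INR; lia).
  apply beta_value_le; [lra | lra |]. intros a Ha.
  eapply Rle_trans; [| apply (HL a n Ha)].
  apply RInt_le; [lra | apply ex_RInt_beta_kernel; lra
                 | apply ex_RInt_continuous_pos; [lra | apply continuous_euler_integrand] |].
  intros t Ht. rewrite beta_kernel_shift. unfold euler_integrand. rewrite Rmult_comm.
  apply Rmult_le_compat_l; [left; apply Rpower_pos | apply pow_1_sub_div_le_exp; fold n; lra].
Qed.

Lemma RInt_euler_integrand_le_beta_value x m a b :
  - 1 < x <= 1 -> 0 < a < b -> b <= INR (S m) ->
  RInt (euler_integrand x) a b <= beta_value (S m) (INR (S m)) (x + 1) + 7 / INR (S m).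
Proof.
  intros Hx Hab Hb. set (n := INR (S m)) in *. assert (Hn : 0 < n) by lra.
  set (q := fun t => (1 + t ^ 3) * exp (- t)).
  assert (Hq : forall t, 0 < t -> continuous q t) by (intros t Ht; unfold q; solve_continuity).
  assert (Hpt : forall t, 0 < t <= n ->
            euler_integrand x t <= beta_kernel (S m) n (x + 1) t + / n * q t).
  { intros t Ht. rewrite beta_kernel_shift. unfold euler_integrand, q.
    assert (Hcomp := exp_mul_1_sub_le_pow m t ltac:(fold n; lra)). fold n in Hcomp.
    assert (Hsq := Rpower_add_2_le x t ltac:(lra) (proj1 Ht)).
    replace (Rpower t (x + 2)) with (Rpower t x * t ^ 2) in Hsq
      by (rewrite Rpower_plus, <- (Rpower_pow 2 t) by lra; simpl INR; f_equal; f_equal; ring).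
    generalize (Rpower_pos t x) (exp_pos (- t)) (Rinv_0_lt_compat n Hn). intros.
    assert (Rpower t x * (exp (- t) * (1 - t ^ 2 / n)) <= Rpower t x * (1 - t / n) ^ S m)
      by (apply Rmult_le_compat_l; lra).
    assert (/ n * (Rpower t x * t ^ 2 * exp (- t)) <= / n * ((1 + t ^ 3) * exp (- t)))
      by (apply Rmult_le_compat_l; [lra | apply Rmult_le_compat_r; lra]).
    replace (/ n * (Rpower t x * t ^ 2 * exp (- t))) with (Rpower t x * exp (- t) * (t ^ 2 / n)) in *
      by (field; lra).
    nra. }
  assert (Hkern : ex_RInt (beta_kernel (S m) n (x + 1)) a b) by (apply ex_RInt_beta_kernel; lra).
  assert (Hqint : ex_RInt q a b) by (apply ex_RInt_continuous_pos; [lra | exact Hq]).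
  eapply Rle_trans.
  { apply (RInt_le _ (fun t => beta_kernel (S m) n (x + 1) t + / n * q t)); [lra | | | ].
    - apply ex_RInt_continuous_pos; [lra | apply continuous_euler_integrand].
    - apply (ex_RInt_plus (V := R_NormedModule));
        [exact Hkern | now apply (ex_RInt_scal (V := R_NormedModule))].
    - intros t Ht. apply Hpt. lra. }
  rewrite (RInt_plus (V := R_CompleteNormedModule));
    [| exact Hkern | now apply (ex_RInt_scal (V := R_NormedModule))].
  rewrite (RInt_scal (V := R_CompleteNormedModule)) by exact Hqint.
  assert (RInt (beta_kernel (S m) n (x + 1)) a b <= beta_value (S m) n (x + 1)).
  { eapply Rle_trans; [| apply (RInt_beta_kernel_le (S m) n (x + 1) a); [lra | split; lra]].
    apply RInt_subinterval_le; try lra; [intros t; apply continuous_beta_kernel |].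
    intros t Ht. apply beta_kernel_ge0. lra. }
  assert (/ n * RInt q a b <= / n * 7)
    by (apply Rmult_le_compat_l; [left; now apply Rinv_0_lt_compat | apply RInt_cubic_exp_le; lra]).
  unfold plus, scal; simpl; unfold mult; simpl. unfold Rdiv. lra.
Qed.

Lemma RInt_euler_integrand_le x a b : - 1 / 2 <= x <= 1 / 2 -> 0 < a < b ->
  RInt (euler_integrand x) a b <= exp (- x * euler_gamma + 4 * x ^ 2).
Proof.
  intros Hx Hab.
  set (u := fun m => exp (4 * x ^ 2) * gauss_approx x m + 7 * / INR (S m)).
  assert (Hu : is_lim_seq u (exp (4 * x ^ 2) * exp (- x * euler_gamma) + 7 * 0)).
  { apply is_lim_seq_plus'; apply is_lim_seq_mult'; try apply is_lim_seq_const;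
      [apply is_lim_seq_gauss_approx; lra|].
    apply (is_lim_seq_incr_1 (fun n => / INR n)).
    replace (Finite 0) with (Rbar_inv p_infty) by reflexivity.
    apply is_lim_seq_inv; [apply is_lim_seq_INR | discriminate]. }
  assert (Hev : eventually (fun m => RInt (euler_integrand x) a b <= u m)).
  { destruct (is_lim_seq_INR (fun y => b < y) (ex_intro _ b (fun y Hy => Hy))) as [N HN].
    exists N. intros m Hm.
    assert (b < INR (S m)) by (rewrite S_INR; generalize (HN m Hm); lra).
    eapply Rle_trans; [apply (RInt_euler_integrand_le_beta_value x m); lra|].
    generalize (beta_value_gauss_bounds x m Hx). unfold u, Rdiv. lra. }
  generalize (is_lim_seq_le_loc (fun _ => RInt (euler_integrand x) a b) u _ _ Hev (is_lim_seq_const _) Hu).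
  simpl. rewrite exp_plus. lra.
Qed.

Lemma Gamma_1p_bounds x : - 1 / 2 <= x <= 1 / 2 ->
  exp (- x * euler_gamma) <= Gamma (1 + x) <= exp (- x * euler_gamma + 4 * x ^ 2).
Proof.
  intros Hx.
  destruct (is_RInt_gen_of_bounded (euler_integrand x) (exp (- x * euler_gamma + 4 * x ^ 2)))
    as [L [HGamma [Hsup HU]]].
  - apply continuous_euler_integrand.
  - intros t _. apply euler_integrand_ge0.
  - intros a b Hab. now apply RInt_euler_integrand_le.
  - replace (Gamma (1 + x)) with L.
    2:{ symmetry. unfold Gamma. replace (1 + x - 1) with x by ring. now apply is_RInt_gen_unique. }
    split; [| exact HU].
    assert (Hbeta : forall m, gauss_approx x m <= L).
    { intros m. eapply Rle_trans; [apply (beta_value_gauss_bounds x m Hx) |].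
      apply beta_value_le_RInt_sup; [lra | exact Hsup]. }
    generalize (is_lim_seq_le (gauss_approx x) (fun _ => L) _ _ Hbeta
                  (is_lim_seq_gauss_approx x ltac:(lra)) (is_lim_seq_const L)).
    easy.
Qed.

Lemma prod_exp_bounds (f l u : nat -> R) N :
  (forall k, (k <= N)%nat -> exp (l k) <= f k <= exp (u k)) ->
  exp (sum_f_R0 l N) <= prod_f_R0 f N <= exp (sum_f_R0 u N).
Proof.
  induction N as [|N IH]; intros H; [simpl; apply H; lia|].
  simpl prod_f_R0. rewrite !tech5, !exp_plus.
  destruct IH as [I1 I2]; [intros k Hk; apply H; lia|].
  destruct (H (S N) (le_n _)) as [H1 H2].
  generalize (exp_pos (sum_f_R0 l N)) (exp_pos (l (S N))). intros.
  split; apply Rmult_le_compat; lra.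
Qed.

Lemma sum_f_R0_scal_l (f : nat -> R) c N : sum_f_R0 (fun k => c * f k) N = c * sum_f_R0 f N.
Proof. rewrite scal_sum. apply sum_eq. intros; ring. Qed.

Lemma prod_Gamma_bounds (A : nat -> R) N M s :
  (forall k, (k <= N)%nat -> 0 < A k <= M) -> Rabs s <= / (2 * M) ->
  exp (- s * sum_f_R0 A N * euler_gamma)
    <= prod_f_R0 (fun k => Gamma (1 + A k * s)) N
    <= exp (- s * sum_f_R0 A N * euler_gamma + 4 * M * s ^ 2 * sum_f_R0 A N).
Proof.
  intros HA Hs.
  destruct (prod_exp_bounds (fun k => Gamma (1 + A k * s)) (fun k => - (A k * s) * euler_gamma)
              (fun k => - (A k * s) * euler_gamma + 4 * (A k * s) ^ 2) N) as [P1 P2].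
  { intros k Hk. destruct (HA k Hk) as [HA0 HAM]. apply Gamma_1p_bounds.
    assert (HM : 0 < M) by lra.
    assert (Rabs (A k * s) <= 1 / 2).
    { rewrite Rabs_mult, (Rabs_pos_eq (A k)) by lra.
      apply Rle_trans with (M * / (2 * M)); [apply Rmult_le_compat; try lra; apply Rabs_pos|].
      right. field. lra. }
    apply Rabs_le_between in H. lra. }
  assert (Hl : sum_f_R0 (fun k => - (A k * s) * euler_gamma) N = - s * sum_f_R0 A N * euler_gamma).
  { replace (- s * sum_f_R0 A N * euler_gamma) with (- s * euler_gamma * sum_f_R0 A N) by ring.
    rewrite <- sum_f_R0_scal_l. apply sum_eq. intros; ring. }
  assert (Hu : sum_f_R0 (fun k => - (A k * s) * euler_gamma + 4 * (A k * s) ^ 2) N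
                 <= - s * sum_f_R0 A N * euler_gamma + 4 * M * s ^ 2 * sum_f_R0 A N).
  { rewrite plus_sum, Hl, <- (sum_f_R0_scal_l A (4 * M * s ^ 2)). apply Rplus_le_compat_l, sum_Rle.
    intros k Hk. destruct (HA k Hk). generalize (pow2_ge_0 s). intros.
    replace (4 * (A k * s) ^ 2) with ((4 * s ^ 2 * A k) * A k) by ring.
    replace (4 * M * s ^ 2 * A k) with ((4 * s ^ 2 * A k) * M) by ring.
    apply Rmult_le_compat_l; nra. }
  rewrite Hl in P1. split; [exact P1 | eapply Rle_trans; [exact P2 | now apply exp_le_mono]].
Qed.

Lemma Rabs_div_ln_add_le P c g K :
  c <> 0 -> exp (- c * g) <= P <= exp (- c * g + K * Rabs c) -> Rabs (/ c * ln P + g) <= K.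
Proof.
  intros Hc [H1 H2].
  assert (HP : 0 < P) by (generalize (exp_pos (- c * g)); lra).
  assert (Hlo : - c * g <= ln P) by (rewrite <- (ln_exp (- c * g)); apply ln_le; [apply exp_pos | exact H1]).
  assert (Hhi : ln P <= - c * g + K * Rabs c)
    by (rewrite <- (ln_exp (- c * g + K * Rabs c)); apply ln_le; [exact HP | exact H2]).
  replace (/ c * ln P + g) with ((ln P + c * g) / c) by (field; exact Hc).
  unfold Rdiv. rewrite Rabs_mult, Rabs_inv, Rabs_pos_eq by lra.
  assert (Hac : 0 < Rabs c) by now apply Rabs_pos_lt.
  apply Rmult_le_reg_r with (Rabs c); [exact Hac|].
  rewrite Rmult_assoc, Rinv_l by lra. lra.
Qed.

Lemma Rabs_div_ln_prod_Gamma_add_le (A : nat -> R) N M s :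
  (forall k, (k <= N)%nat -> 0 < A k <= M) -> s <> 0 -> Rabs s <= / (2 * M) ->
  Rabs (/ (s * sum_f_R0 A N) * ln (prod_f_R0 (fun k => Gamma (1 + A k * s)) N) + euler_gamma)
    <= 4 * M * Rabs s.
Proof.
  intros HA Hs0 Hs.
  assert (HS : 0 < sum_f_R0 A N).
  { clear Hs. induction N as [|N IH]; simpl; [apply HA; lia|].
    assert (0 < sum_f_R0 A N) by (apply IH; intros; apply HA; lia).
    generalize (HA (S N) (le_n _)); lra. }
  apply Rabs_div_ln_add_le; [apply Rmult_integral_contrapositive; split; lra|].
  replace (4 * M * Rabs s * Rabs (s * sum_f_R0 A N)) with (4 * M * s ^ 2 * sum_f_R0 A N)
    by (rewrite Rabs_mult, (Rabs_pos_eq (sum_f_R0 A N)), <- (pow2_abs s) by lra; ring).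
  replace (- (s * sum_f_R0 A N)) with (- s * sum_f_R0 A N) by ring.
  now apply prod_Gamma_bounds.
Qed.

Lemma exp_near_bounds z g eps :
  0 < eps -> Rabs (z + g) < ln (1 + eps) -> (1 - eps) * exp (- g) < exp z < (1 + eps) * exp (- g).
Proof.
  intros Heps Hzg. apply Rabs_def2 in Hzg.
  generalize (exp_pos (- g)). intros Hg. split.
  - apply Rle_lt_trans with (exp (- g - ln (1 + eps))); [| apply exp_increasing; lra].
    unfold Rminus. rewrite exp_plus, (exp_Ropp (ln (1 + eps))), exp_ln by lra.
    assert (1 - eps <= / (1 + eps)).
    { apply Rmult_le_reg_r with (1 + eps); [lra|]. rewrite Rinv_l by lra. nra. }
    rewrite Rmult_comm. apply Rmult_le_compat_l; lra.
  - apply Rlt_le_trans with (exp (- g + ln (1 + eps))); [apply exp_increasing; lra|].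
    rewrite exp_plus, exp_ln by lra. right; ring.
Qed.

Theorem mainTheorem8 (a : nat -> nat -> R) :
  (forall n : nat, (2 <= n)%nat ->
     (forall i : nat, (1 <= i <= n)%nat -> 0 < a i n) /\
     sum_f_R0 (fun k => a (k + 1)%nat n) (n - 1) = INR n) ->
  (exists M : R, 1 <= M /\
     forall n i : nat, (2 <= n)%nat -> (1 <= i <= n)%nat -> a i n <= M) ->
  forall eps : R, 0 < eps ->
  exists delta : R, 0 < delta /\
    forall s : R, - delta < s < delta -> s <> 0 ->
    forall n : nat, (2 <= n)%nat ->
      (1 - eps) * exp (- euler_gamma) <
        Rpower (prod_f_R0 (fun k => Gamma (1 + a (k + 1)%nat n * s)) (n - 1))
               (/ (s * INR n))
      /\
      Rpower (prod_f_R0 (fun k => Gamma (1 + a (k + 1)%nat n * s)) (n - 1))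
             (/ (s * INR n))
        < (1 + eps) * exp (- euler_gamma).
Proof.
  intros Hrow [M [HM HaM]] eps Heps.
  assert (Hl : 0 < ln (1 + eps)) by (rewrite <- ln_1; apply ln_increasing; lra).
  exists (Rmin (/ (2 * M)) (ln (1 + eps) / (4 * M))).
  split; [apply Rmin_pos; [apply Rinv_0_lt_compat | apply Rdiv_lt_0_compat]; lra|].
  intros s Hs Hs0 n Hn. destruct (Hrow n Hn) as [Hpos Hsum].
  assert (Hs1 : Rabs s <= / (2 * M))
    by (generalize (Rmin_l (/ (2 * M)) (ln (1 + eps) / (4 * M))); intros; apply Rabs_le_between; split; lra).
  assert (Hs2 : 4 * M * Rabs s < ln (1 + eps)).
  { replace (ln (1 + eps)) with (4 * M * (ln (1 + eps) / (4 * M))) by (field; lra).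
    apply Rmult_lt_compat_l; [lra|].
    generalize (Rmin_r (/ (2 * M)) (ln (1 + eps) / (4 * M))). intros; apply Rabs_def1; lra. }
  assert (Hnear := Rabs_div_ln_prod_Gamma_add_le (fun k => a (k + 1)%nat n) (n - 1) M s
                     ltac:(intros k Hk; split; [apply Hpos | apply HaM]; lia) Hs0 Hs1).
  rewrite Hsum in Hnear.
  apply exp_near_bounds; [exact Heps | lra].
Qed.
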